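(* Let $\ell<t$ be positive integers and $n\ge 2t+2$. Then $\lambda(C_{2t+1}(T_{n-2t,2}))<\lambda(C_{2\ell+1}(T_{n-2\ell,2}))$.
   Context: $\lambda(G)$ denotes the spectral radius of the adjacency matrix of $G$. $T_{m,2}$ is the complete bipartite graph on $m$ vertices with parts of sizes $\lfloor m/2\rfloor$ and $\lceil m/2\rceil$. For $s\ge1$, $C_{2s+1}(T_{n-2s,2})$ is the $n$-vertex graph obtained by identifying one vertex of a cycle $C_{2s+1}$ with one vertex of $T_{n-2s,2}$ lying in the part of size $\lfloor (n-2s)/2\rfloor$. *)

From mathcomp Require Import all_boot all_order all_algebra all_field.
Set Implicit Arguments. Unset Strict Implicit. Unset Printing Implicit Defensive.
Import Order.TTheory GRing.Theory Num.Theory.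
Local Open Scope ring_scope.

Definition adjmx (n : nat) (e : rel 'I_n) : 'M[algC]_n :=
  \matrix_(i, j) (e i j)%:R.

(* The multiset of (complex) eigenvalues of a square matrix: the roots of its
   characteristic polynomial, listed with multiplicity. *)
Definition eigs (n : nat) (A : 'M[algC]_n) : seq algC :=
  sval (closed_field_poly_normal (char_poly A)).

(* Spectral radius: maximum modulus of an eigenvalue (0 for the empty matrix). *)
Definition spectral_radius (n : nat) (A : 'M[algC]_n) : algC :=
  \big[Num.max/0]_(z <- eigs A) `|z|.

Definition lambda (n : nat) (e : rel 'I_n) : algC := spectral_radius (adjmx e).

(* Let m := n - 2s. Vertices 0..m-1 form T_{m,2}, with part
   A = {0, .., m./2 - 1} (size floor(m/2)) and B = {m./2, .., m-1}
   (size ceil(m/2)).  Vertices m, .., m+2s-1 are the new cycle vertices;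
   the cycle C_{2s+1} is 0, m, m+1, .., m+2s-1, 0, so the vertex 0 (which lies
   in the part of size floor(m/2)) is the identified vertex. *)
Local Open Scope nat_scope.
Definition in_cycle (n s : nat) (v : 'I_n) : bool := (v == 0 :> nat) || (n - 2 * s <= v).
Definition cyc_pos (n s : nat) (v : 'I_n) : nat :=
  if v == 0 :> nat then 0 else (v - (n - 2 * s)).+1.

Definition CT_edge (n s : nat) : rel 'I_n := fun u v =>
  let m := n - 2 * s in
  [&& (u < m)%N, (v < m)%N & ((u < m./2)%N != (v < m./2)%N)]
  || [&& in_cycle s u, in_cycle s v &
        (((cyc_pos s u).+1 %% (2 * s).+1 == cyc_pos s v)
         || ((cyc_pos s v).+1 %% (2 * s).+1 == cyc_pos s u))].
Arguments CT_edge n s : clear implicits.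

From mathcomp Require Import all_boot all_order all_algebra all_field.
From mathcomp Require Import zify lra.
Set Implicit Arguments.
Unset Strict Implicit.
Unset Printing Implicit Defensive.
Import Order.TTheory GRing.Theory Num.Theory.
Local Open Scope ring_scope.
Local Open Scope sesquilinear_scope.

(* Both spectral radii are compared with a rational test value c.  A positive
   vector x with A x < c x componentwise forces every eigenvalue of the
   adjacency matrix A below c in modulus (Collatz-Wielandt), and a nonnegative
   nonzero y with A y >= c y gives c <= lambda via the Rayleigh quotient, since
   A is real symmetric, hence normal.  For vectors constant on the vertex
   classes of C_{2s+1}(T_{n-2s,2}) these conditions become a few scalar
   inequalities, and a suitable c separates lambda for s + 1 from lambda for s;
   the theorem follows by induction on t. *)

Section SpectralRadius.
Variable n : nat.
Implicit Types (A : 'M[algC]_n) (z c : algC).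

Lemma mem_eigs A z : (z \in eigs A) = eigenvalue A z.
Proof.
rewrite eigenvalue_root_char /eigs; case: closed_field_poly_normal => r /= ->.
by rewrite (monicP (char_poly_monic A)) scale1r root_prod_XsubC.
Qed.

Lemma norm_eigenvalue_le_spectral_radius A z :
  eigenvalue A z -> `|z| <= spectral_radius A.
Proof.
rewrite -mem_eigs /spectral_radius; elim: (eigs A) => // x r IH.
have max_real : \big[Num.max/0]_(y <- r) `|y| \is Num.real.
  by apply: bigmax_real => // y _; apply/ger0_real/normr_ge0.
rewrite inE big_cons comparable_le_max; last exact/real_comparable/max_real/ger0_real.
by case/orP => [/eqP->|/IH->]; rewrite ?lexx ?orbT.
Qed.

Lemma spectral_radius_lt A c :
  0 < c -> (forall z, eigenvalue A z -> `|z| < c) -> spectral_radius A < c.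
Proof.
move=> c_gt0 Hc; rewrite /spectral_radius big_seq_cond.
by apply: bigmax_lt => // z /andP[]; rewrite mem_eigs => /Hc.
Qed.

Lemma eigenvalue_spectral_diag A k :
  A \is normalmx -> eigenvalue A (spectral_diag A 0 k).
Proof.
move=> /orthomx_spectralP; set P := spectralmx A => A_eq.
apply/eigenvalueP; exists (row k P).
  rewrite -row_mul [in LHS]A_eq !mulmxA mulmxV ?spectral_unit // mul1mx.
  by rewrite row_mul row_diag_mx -scalemxAl -rowE.
apply/negP => /eqP rk0; have /unitarymxP PPt := spectral_unitarymx A.
have /rowP/(_ k)/eqP := congr1 (row k) PPt.
by rewrite row_mul rk0 mul0mx !mxE eqxx eq_sym oner_eq0.
Qed.

Lemma normal_rayleigh_le A (u : 'rV_n) : A \is normalmx ->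
  `|(u *m A *m u^t*) 0 0| <= spectral_radius A * (u *m u^t*) 0 0.
Proof.
move=> Anormal; set P := spectralmx A; set D := spectral_diag A.
have Punitary : P \is unitarymx := spectral_unitarymx A.
set w := u *m P^t*.
have w_adj : w^t* = P *m u^t* by rewrite trmx_mul map_mxM trmxCK.
have -> : (u *m u^t*) 0 0 = \sum_k `|w 0 k| ^+ 2.
  have PtP : P^t* *m P = 1%:M by rewrite -invmx_unitary // mulVmx ?spectral_unit.
  have -> : u *m u^t* = w *m w^t* by rewrite w_adj mulmxA -(mulmxA u) PtP mulmx1.
  by rewrite mxE; apply: eq_bigr => k _; rewrite !mxE normCK.
have -> : (u *m A *m u^t*) 0 0 = \sum_k `|w 0 k| ^+ 2 * D 0 k.
  rewrite (orthomx_spectralP Anormal) invmx_unitary // !mulmxA -/w.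
  rewrite -(mulmxA _ P) -w_adj mxE; apply: eq_bigr => k _.
  by rewrite mul_mx_diag !mxE normCK mulrAC.
rewrite mulr_sumr; apply: (le_trans (ler_norm_sum _ _ _)); apply: ler_sum => k _.
rewrite normrM normrX normr_id mulrC ler_wpM2r ?exprn_ge0 //.
exact/norm_eigenvalue_le_spectral_radius/eigenvalue_spectral_diag.
Qed.

End SpectralRadius.

Section AdjacencyBounds.
Variables (n : nat) (e : rel 'I_n).
Hypothesis e_sym : symmetric e.

Lemma adjmx_normal : adjmx e \is normalmx.
Proof.
have adj_sym : (adjmx e)^t* = adjmx e.
  by apply/matrixP => i j; rewrite !mxE conjC_nat e_sym.
by rewrite qualifE adj_sym.
Qed.

(* Compare a left eigenvector v with x at a coordinate maximising |v_i| / x_i. *)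
Lemma lambda_lt_of_supervector (x : 'I_n -> algC) c : 0 < c ->
  (forall i, 0 < x i) -> (forall i, \sum_j (e i j)%:R * x j < c * x i) ->
  lambda e < c.
Proof.
move=> c_gt0 x_gt0 x_super; apply: spectral_radius_lt => // z.
case/eigenvalueP=> v vA /rV0Pn[i0 vi0_neq0].
pose g i := `|v 0 i| / x i.
have g_ge0 i : 0 <= g i by rewrite divr_ge0 ?normr_ge0 ?ltW.
have [j _ g_max] : extremum_spec >=%O predT g (Order.arg_max i0 predT g).
  by apply: comparable_arg_maxP => // i k _ _; apply: real_comparable; apply: ger0_real.
have v_le i : `|v 0 i| <= g j * x i by rewrite -ler_pdivrMr //; exact: g_max.
have gj_gt0 : 0 < g j.
  rewrite lt_def g_ge0 andbT; apply: contraNneq vi0_neq0 => gj0.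
  by rewrite -normr_eq0 eq_le normr_ge0 andbT -(mul0r (x i0)) -gj0.
have gx : g j * x j = `|v 0 j| by rewrite divfK ?lt0r_neq0.
have vj_gt0 : 0 < `|v 0 j| by rewrite -gx mulr_gt0.
rewrite -(ltr_pM2r vj_gt0) -normrM.
have -> : z * v 0 j = \sum_i v 0 i * (e i j)%:R.
  by move/rowP/(_ j): vA; rewrite !mxE => <-; apply: eq_bigr => i _; rewrite mxE.
apply: (le_lt_trans (ler_norm_sum _ _ _)).
apply: (@le_lt_trans _ _ (g j * \sum_i (e j i)%:R * x i)).
  rewrite mulr_sumr; apply: ler_sum => i _.
  by rewrite normrM normr_nat e_sym [_%:R * x i]mulrC mulrA ler_wpM2r.
by rewrite -gx mulrCA ltr_pM2l.
Qed.

Lemma lambda_ge_of_subvector (y : 'I_n -> algC) c : 0 <= c ->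
  (forall i, 0 <= y i) -> (exists i, 0 < y i) ->
  (forall i, c * y i <= \sum_j (e i j)%:R * y j) -> c <= lambda e.
Proof.
move=> c_ge0 y_ge0 [i1 yi1_gt0] y_sub; pose u : 'rV_n := \row_i y i.
have y_conj i : (y i)^* = y i by apply: geC0_conj.
have u_norm_gt0 : 0 < (u *m u^t*) 0 0.
  rewrite mxE (bigD1 i1) //= ltr_wpDr ?sumr_ge0 // => [i _|];
  by rewrite !mxE y_conj ?mulr_ge0 ?mulr_gt0.
have rayleigh_ge : c * (u *m u^t*) 0 0 <= (u *m adjmx e *m u^t*) 0 0.
  rewrite !mxE mulr_sumr; apply: ler_sum => k _; rewrite !mxE y_conj mulrA ler_wpM2r //.
  rewrite (eq_bigr (fun j => (e k j)%:R * y j)) ?y_sub // => j _.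
  by rewrite !mxE e_sym mulrC.
have rayleigh_real : (u *m adjmx e *m u^t*) 0 0 \is Num.real.
  by rewrite ger0_real // (le_trans _ rayleigh_ge) // mulr_ge0 // ltW.
rewrite -(ler_pM2r u_norm_gt0); apply: (le_trans rayleigh_ge).
rewrite /lambda; exact: le_trans (real_ler_norm rayleigh_real) (normal_rayleigh_le u adjmx_normal).
Qed.

Lemma ratr_adj_rowsum (x : 'I_n -> rat) i :
  \sum_j (e i j)%:R * ratr (x j) = ratr (\sum_j (e i j)%:R * x j) :> algC.
Proof. by rewrite rmorph_sum; apply: eq_bigr => j _; rewrite rmorphM rmorph_nat. Qed.

Lemma lambda_lt_of_rat_supervector (x : 'I_n -> rat) c : 0 < c ->
  (forall i, 0 < x i) -> (forall i, \sum_j (e i j)%:R * x j < c * x i) ->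
  lambda e < ratr c.
Proof.
move=> c_gt0 x_gt0 x_super.
apply: (@lambda_lt_of_supervector (fun i => ratr (x i))) => [|i|i]; rewrite ?ltr0q //.
by rewrite ratr_adj_rowsum -rmorphM ltr_rat.
Qed.

Lemma lambda_ge_of_rat_subvector (y : 'I_n -> rat) c : 0 <= c ->
  (forall i, 0 <= y i) -> (exists i, 0 < y i) ->
  (forall i, c * y i <= \sum_j (e i j)%:R * y j) -> ratr c <= lambda e.
Proof.
move=> c_ge0 y_ge0 [i1 yi1_gt0] y_sub.
apply: (@lambda_ge_of_subvector (fun i => ratr (y i))) => [|i||i]; rewrite ?ler0q //.
  by exists i1; rewrite ltr0q.
by rewrite ratr_adj_rowsum -rmorphM ler_rat.
Qed.

End AdjacencyBounds.

Lemma sum_adj_nbhd (R : pzSemiRingType) n (e : rel 'I_n) (i : 'I_n) (r : seq nat)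
    (f : nat -> R) :
  (forall j : 'I_n, e i j = ((j : nat) \in r)) -> uniq r -> (forall k, k \in r -> k < n)%N ->
  \sum_j (e i j)%:R * f j = \sum_(k <- r) f k.
Proof.
move=> e_i r_uniq r_lt; under eq_bigr => j _ do rewrite e_i.
rewrite -(big_mkord xpredT (fun k => (k \in r)%:R * f k)) /=.
under eq_bigr => k _ do rewrite mulr_natl mulrb.
rewrite -big_mkcond -big_filter; apply: perm_big.
apply: uniq_perm; rewrite ?filter_uniq ?iota_uniq // => k.
rewrite mem_filter mem_index_iota /=; case: (boolP (k \in r)) => // k_r.
exact: r_lt.
Qed.

Lemma succn_mod_cycle k p : (p <= k)%N -> (p.+1 %% k.+1 = if p == k then 0 else p.+1)%N.
Proof. by move=> p_le; case: eqP => [->|p_neq]; rewrite ?modnn ?modn_small //; lia. Qed.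

Section CycleTuranGraph.
Local Open Scope nat_scope.
Variables n s : nat.
Hypotheses (s_gt0 : 0 < s) (n_ge : 2 * s + 2 <= n).
Local Notation m := (n - 2 * s).
Local Notation h := m./2.

(* Vertex classes: the hub 0, the rest of its Turan part ([small], 0 < i < h),
   the other Turan part ([large]) and the cycle m, .., n-1, whose ends m and
   n-1 are adjacent to the hub. *)

Lemma CT_edge_sym : symmetric (CT_edge n s).
Proof. by move=> u v; rewrite /CT_edge; congr orb; [lia | rewrite andbCA orbC]. Qed.

Lemma cyc_pos_le (v : 'I_n) : cyc_pos s v <= 2 * s.
Proof. by have := ltn_ord v; rewrite /cyc_pos; case: ifP; lia. Qed.

Ltac nbhd := move=> *;
  rewrite /CT_edge /in_cycle !succn_mod_cycle ?cyc_pos_le // /cyc_pos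
          ?mem_cat ?mem_index_iota ?inE;
  have := ltn_ord i; have := ltn_ord j; repeat case: ifP; lia.

Lemma CT_edge_hub (i j : 'I_n) : i = 0 :> nat ->
  CT_edge n s i j = ((j : nat) \in index_iota h m ++ [:: m; n.-1]).
Proof. nbhd. Qed.

Lemma CT_edge_small (i j : 'I_n) : 0 < i < h ->
  CT_edge n s i j = ((j : nat) \in index_iota h m).
Proof. nbhd. Qed.

Lemma CT_edge_large (i j : 'I_n) : h <= i < m ->
  CT_edge n s i j = ((j : nat) \in index_iota 0 h).
Proof. nbhd. Qed.

Lemma CT_edge_cycle_first (i j : 'I_n) : i = m :> nat ->
  CT_edge n s i j = ((j : nat) \in [:: 0; m.+1]).
Proof. nbhd. Qed.

Lemma CT_edge_cycle_last (i j : 'I_n) : i = n.-1 :> nat ->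
  CT_edge n s i j = ((j : nat) \in [:: n.-2; 0]).
Proof. nbhd. Qed.

Lemma CT_edge_cycle_inner (i j : 'I_n) : m < i < n.-1 ->
  CT_edge n s i j = ((j : nat) \in [:: i.-1; i.+1]).
Proof. nbhd. Qed.

Ltac nbhd_side := first
  [ rewrite /= ?cat_uniq /index_iota ?iota_uniq /= ?mem_iota ?inE; lia
  | move=> k; rewrite ?mem_cat ?mem_index_iota ?inE; lia ].

Lemma rowsum_hub (i : 'I_n) {R : pzSemiRingType} (f : nat -> R) : i = 0 :> nat ->
  (\sum_j (CT_edge n s i j)%:R * f j = \sum_(h <= k < m) f k + f m + f n.-1)%R.
Proof.
move=> i0; rewrite (sum_adj_nbhd _ (fun j => CT_edge_hub j i0)); try nbhd_side.
by rewrite big_cat big_cons big_seq1 /= addrA.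
Qed.

Lemma rowsum_small (i : 'I_n) {R : pzSemiRingType} (f : nat -> R) : 0 < i < h ->
  (\sum_j (CT_edge n s i j)%:R * f j = \sum_(h <= k < m) f k)%R.
Proof. by move=> i_small; rewrite (sum_adj_nbhd _ (fun j => CT_edge_small j i_small)) //; nbhd_side. Qed.

Lemma rowsum_large (i : 'I_n) {R : pzSemiRingType} (f : nat -> R) : h <= i < m ->
  (\sum_j (CT_edge n s i j)%:R * f j = \sum_(0 <= k < h) f k)%R.
Proof. by move=> i_large; rewrite (sum_adj_nbhd _ (fun j => CT_edge_large j i_large)) //; nbhd_side. Qed.

Lemma rowsum_cycle_first (i : 'I_n) {R : pzSemiRingType} (f : nat -> R) : i = m :> nat ->
  (\sum_j (CT_edge n s i j)%:R * f j = f 0 + f m.+1)%R.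
Proof.
move=> im; rewrite (sum_adj_nbhd _ (fun j => CT_edge_cycle_first j im)); try nbhd_side.
by rewrite big_cons big_seq1.
Qed.

Lemma rowsum_cycle_last (i : 'I_n) {R : pzSemiRingType} (f : nat -> R) : i = n.-1 :> nat ->
  (\sum_j (CT_edge n s i j)%:R * f j = f n.-2 + f 0)%R.
Proof.
move=> il; rewrite (sum_adj_nbhd _ (fun j => CT_edge_cycle_last j il)); try nbhd_side.
by rewrite big_cons big_seq1.
Qed.

Lemma rowsum_cycle_inner (i : 'I_n) {R : pzSemiRingType} (f : nat -> R) : m < i < n.-1 ->
  (\sum_j (CT_edge n s i j)%:R * f j = f i.-1 + f i.+1)%R.
Proof.
move=> i_inner; rewrite (sum_adj_nbhd _ (fun j => CT_edge_cycle_inner j i_inner)); try nbhd_side.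
by rewrite big_cons big_seq1.
Qed.

Lemma CT_vertex_ind (P : 'I_n -> Prop) :
  (forall i : 'I_n, i = 0 :> nat -> P i) ->
  (forall i : 'I_n, 0 < i < h -> P i) ->
  (forall i : 'I_n, h <= i < m -> P i) ->
  (forall i : 'I_n, i = m :> nat -> P i) ->
  (forall i : 'I_n, i = n.-1 :> nat -> P i) ->
  (forall i : 'I_n, m < i < n.-1 -> P i) ->
  forall i, P i.
Proof.
move=> hub small large first last inner i.
have [|i_neq0] := eqVneq (i : nat) 0; first exact: hub.
have [i_lt|h_le] := ltnP i h; first by apply: small; lia.
have [i_lt|m_le] := ltnP i m; first by apply: large; lia.
have [|i_neqm] := eqVneq (i : nat) m; first exact: first.
have [|i_neql] := eqVneq (i : nat) n.-1; first exact: last.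
by apply: inner; have := ltn_ord i; lia.
Qed.

Definition profile (x0 xA xB xE xI : rat) (j : nat) : rat :=
  if j == 0 then x0 else if j < h then xA else if j < m then xB
  else if (j == m) || (j == n.-1) then xE else xI.

Ltac profile_case := move=> *; rewrite /profile;
  repeat case: ifP => ?; first [reflexivity | exfalso; lia].

Section Profile.
Variables x0 xA xB xE xI : rat.
Local Notation f := (profile x0 xA xB xE xI).

Lemma profile_hub : f 0 = x0. Proof. by []. Qed.
Lemma profile_small j : 0 < j < h -> f j = xA. Proof. profile_case. Qed.
Lemma profile_large j : h <= j < m -> f j = xB. Proof. profile_case. Qed.
Lemma profile_end j : (j == m) || (j == n.-1) -> f j = xE. Proof. profile_case. Qed.
Lemma profile_inner j : m < j < n.-1 -> f j = xI. Proof. profile_case. Qed.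

Lemma sum_profile_large : (\sum_(h <= k < m) f k = (m - h)%:R * xB)%R.
Proof. by rewrite (eq_big_nat _ _ profile_large) sumr_const_nat mulr_natl. Qed.

Lemma sum_profile_small : (\sum_(0 <= k < h) f k = x0 + h.-1%:R * xA)%R.
Proof.
rewrite big_ltn; last lia.
by rewrite (eq_big_nat _ _ profile_small) sumr_const_nat mulr_natl subn1.
Qed.

End Profile.

Lemma profile_cycle x0 xA xB xE j : m <= j -> profile x0 xA xB xE xE j = xE.
Proof. profile_case. Qed.

Lemma lambda_CT_lt (a b : nat) (c q p r e : rat) :
  h.-1 = a -> m - h = b -> (0 < c -> 0 < q -> 0 < p -> 0 < r -> 0 < e ->
  b%:R * r + e + e < c * q -> b%:R * r < c * p -> q + a%:R * p < c * r ->
  q + e < c * e -> e + e < c * e -> lambda (CT_edge n s) < ratr c)%R.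
Proof.
move=> <- <- c_gt0 q_gt0 p_gt0 r_gt0 e_gt0 hub_lt small_lt large_lt end_lt inner_lt.
apply: (@lambda_lt_of_rat_supervector _ _ CT_edge_sym (fun j => profile q p r e e j)) => //.
  by move=> i; rewrite /profile; repeat case: ifP.
apply: CT_vertex_ind => i Hi.
- by rewrite rowsum_hub // Hi profile_hub sum_profile_large !profile_cycle //; lia.
- by rewrite rowsum_small // sum_profile_large profile_small.
- by rewrite rowsum_large // sum_profile_small profile_large.
- by rewrite rowsum_cycle_first // Hi profile_hub !profile_cycle.
- by rewrite rowsum_cycle_last // Hi profile_hub !profile_cycle 1?addrC //; lia.
- by rewrite rowsum_cycle_inner // !profile_cycle //; lia.
Qed.

Lemma lambda_CT_ge (a b : nat) (c x0 xA xB xE : rat) :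
  h.-1 = a -> m - h = b -> (0 <= c -> 0 < x0 -> 0 <= xA -> 0 <= xB -> 0 <= xE ->
  c * x0 <= b%:R * xB + xE + xE -> c * xA <= b%:R * xB -> c * xB <= x0 + a%:R * xA ->
  c * xE <= x0 -> ratr c <= lambda (CT_edge n s))%R.
Proof.
move=> <- <- c_ge0 x0_gt0 xA_ge0 xB_ge0 xE_ge0 hub_ge small_ge large_ge end_ge.
have f_ge0 j : (0 <= profile x0 xA xB xE 0 j)%R.
  by rewrite /profile; repeat case: ifP => _ //; apply: ltW.
have n_gt0 : 0 < n by lia.
apply: (@lambda_ge_of_rat_subvector _ _ CT_edge_sym (fun j => profile x0 xA xB xE 0 j)) => //.
  by exists (Ordinal n_gt0).
apply: CT_vertex_ind => i Hi.
- by rewrite rowsum_hub // Hi profile_hub sum_profile_large !profile_end ?eqxx ?orbT.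
- by rewrite rowsum_small // sum_profile_large profile_small.
- by rewrite rowsum_large // sum_profile_small profile_large.
- by rewrite rowsum_cycle_first // Hi profile_hub profile_end ?eqxx // (le_trans end_ge) ?lerDl.
- by rewrite rowsum_cycle_last // Hi profile_hub profile_end ?eqxx ?orbT // (le_trans end_ge) ?lerDr.
- by rewrite rowsum_cycle_inner // profile_inner // mulr0 addr_ge0.
Qed.

End CycleTuranGraph.

(* The separating values c and the test vectors were found numerically; for
   n - 2s >= 6 the lower test vector vanishes on the cycle, so it only uses
   lambda(T_{n-2s,2}) >= c. *)
Lemma lambda_CT_succ_lt n s : (0 < s)%N -> (2 * s + 4 <= n)%N ->
  lambda (CT_edge n s.+1) < lambda (CT_edge n s).
Proof.
move=> s_gt0 n_ge; have s1_gt0 : (0 < s.+1)%N by [].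
have n_ge1 : (2 * s.+1 + 2 <= n)%N by lia.
have n_ge0 : (2 * s + 2 <= n)%N by lia.
have [k [m_even|m_odd]] : exists k, (n - 2 * s = k.*2 + 4 \/ n - 2 * s = k.*2 + 5)%N.
  by exists ((n - 2 * s - 4)./2); lia.
- case: k m_even => [|k] m_eq.
  + apply: (@lt_le_trans _ _ (ratr (11/5 : rat))).
      by apply: (@lambda_CT_lt _ _ s1_gt0 n_ge1 0 1 _ 66 15 31 56); [lia | lia | lra ..].
    by apply: (@lambda_CT_ge _ _ s_gt0 n_ge0 1 2 _ 71 50 55 32); [lia | lia | lra ..].
  + have k_ge0 : 0 <= k%:R :> rat := ler0n _ _.
    apply: (@lt_le_trans _ _ (ratr (k%:R + 3 : rat))).
      apply: (@lambda_CT_lt _ _ s1_gt0 n_ge1 (k + 1) (k + 2) _ 3 2 2 2);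
        [lia | lia | rewrite ?natrD; lra ..].
    apply: (@lambda_CT_ge _ _ s_gt0 n_ge0 (k + 2) (k + 3) _ (k%:R + 3) (k%:R + 3) (k%:R + 3) 0);
      [lia | lia | rewrite ?natrD; nra ..].
- case: k m_odd => [|k] m_eq.
  + apply: (@lt_le_trans _ _ (ratr (12/5 : rat))).
      by apply: (@lambda_CT_lt _ _ s1_gt0 n_ge1 0 2 _ 100 40 45 72); [lia | lia | lra ..].
    by apply: (@lambda_CT_ge _ _ s_gt0 n_ge0 1 3 _ (12/5) (12/5) 2 0); [lia | lia | lra ..].
  + have k_ge0 : 0 <= k%:R :> rat := ler0n _ _.
    apply: (@lt_le_trans _ _ (ratr (k%:R + 10/3 : rat))).
      apply: (@lambda_CT_lt _ _ s1_gt0 n_ge1 (k + 1) (k + 3) _ 2 1 1 1);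
        [lia | lia | rewrite ?natrD; lra ..].
    apply: (@lambda_CT_ge _ _ s_gt0 n_ge0 (k + 2) (k + 4) _ (k%:R + 10/3) (k%:R + 10/3) (k%:R + 3) 0);
      [lia | lia | rewrite ?natrD; nra ..].
Qed.

Theorem lemma3p5 (l t n : nat) :
  (0 < l)%N -> (l < t)%N -> (2 * t + 2 <= n)%N ->
  lambda (CT_edge n t) < lambda (CT_edge n l).
Proof.
move=> l_gt0; elim: t => [//|t IH] l_lt n_ge.
have step : lambda (CT_edge n t.+1) < lambda (CT_edge n t).
  by apply: lambda_CT_succ_lt; lia.
have [->|l_neq] := eqVneq l t; first exact: step.
by apply: lt_trans step (IH _ _); lia.
Qed.
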